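(* Let $G$ be a finite simple graph without isolated vertices. Then the non-cover complex $\mathcal{NC}(G)$ is $(|V(G)|-i\gamma(G)-1)$-collapsible.
   Context: For a finite simple graph $G$, a cover of $G$ is a set $W\subseteq V(G)$ such that $V(G)\setminus W$ is an independent set (i.e. $W$ contains an endpoint of every edge). The non-cover complex $\mathcal{NC}(G)$ is the simplicial complex on $V(G)$ whose faces are all sets $W\subseteq V(G)$ that are not covers of $G$ (equivalently, $V(G)\setminus W$ contains both endpoints of some edge). For $A,D\subseteq V(G)$, $D$ dominates $A$ if every $v\in A$ has a neighbor in $D$; $\gamma(G;A)$ is the minimum size of a set dominating $A$. The independent domination number is $i\gamma(G)=\max\{\gamma(G;I): I \text{ an independent set of } G\}$ (with $i\gamma(G)=\infty$ if $G$ has an isolated vertex). For a finite simplicial complex $X$, a face $\sigma$ is free if exactly one facet of $X$ contains $\sigma$; an elementary $d$-collapse deletes all faces containing a given free face of size at most $d$; $X$ is $d$-collapsible if the void complex can be obtained from $X$ by a finite sequence of elementary $d$-collapses. *)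

From mathcomp Require Import all_boot.
Set Implicit Arguments. Unset Strict Implicit. Unset Printing Implicit Defensive.

Definition simple_graph (T : finType) (e : rel T) : Prop :=
  symmetric e /\ irreflexive e.

Section Graphs.
Variables (T : finType) (e : rel T).

Definition no_isolated : Prop := forall v : T, exists u : T, e v u.

Definition is_cover (W : {set T}) : bool :=
  [forall u, forall v, e u v ==> ((u \in W) || (v \in W))].

Definition non_cover_complex : {set {set T}} := [set W | ~~ is_cover W].

Definition independent (I : {set T}) : bool :=
  [forall u in I, forall v in I, ~~ e u v].

Definition dominates (D A : {set T}) : bool :=
  [forall v in A, exists u in D, e v u].

(* gamma(G;A); value #|T|.+1 plays the role of infinity (no dominating set) *)
Definition gammaA (A : {set T}) : nat :=
  \big[minn/#|T|.+1]_(D : {set T} | dominates D A) #|D|.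

(* independent domination number (finite under the no-isolated-vertex hyp.) *)
Definition indep_dom : nat := \max_(I : {set T} | independent I) gammaA I.
End Graphs.

Section Complexes.
Variable T : finType.
Implicit Types (X : {set {set T}}) (s t : {set T}).

Definition is_facet X t : bool :=
  (t \in X) && [forall u in X, (t \subset u) ==> (u == t)].

Definition is_free_face X s : bool :=
  (s \in X) && (#|[set t in X | is_facet X t && (s \subset t)]| == 1).

Definition collapse_at X s : {set {set T}} := [set t in X | ~~ (s \subset t)].

Inductive elem_collapse (d : nat) X : {set {set T}} -> Prop :=
  | ElemCollapse s : is_free_face X s -> #|s| <= d ->
      elem_collapse d X (collapse_at X s).

Inductive d_collapsible (d : nat) : {set {set T}} -> Prop :=
  | dcoll_void : d_collapsible d set0
  | dcoll_step X Y : elem_collapse d X Y -> d_collapsible d Y -> d_collapsible d X.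
End Complexes.

From mathcomp Require Import all_boot zify.
Set Implicit Arguments. Unset Strict Implicit. Unset Printing Implicit Defensive.

(* The argument is an induction along link/deletion decompositions.
   1. For complexes: if lk(X,v) is d-collapsible and del(X,v) is
      (d+1)-collapsible, then X is (d+1)-collapsible; elementary collapses
      of the link at a free face s lift to collapses of X at v ∪ s.
   2. Both lk and del of a non-cover complex are again non-cover complexes,
      provided we allow loops: for V ⊆ V(G) and a set A of looped vertices,
      ncc V A is the non-cover complex of G[V] with a loop at every vertex
      of A.  Deleting an unlooped v adds loops at the neighbours of v;
      deleting a looped v leaves a full simplex.
   3. The main induction (on |V|) carries an independent set I of G[V]
      together with the bound |active(V,A)| <= d + |D| + 1 for every
      D ⊆ V dominating I, where active(V,A) are the non-isolated vertices of
      the looped graph.  Both bounds survive passing to the link and to the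
      deletion of any active vertex outside I (with d lowered by one for the
      link when the link is non-void); when every active vertex lies in I
      the complex is void.
   4. The theorem is the case V = V(G), A = ∅, I an independent set
      realising iγ(G). *)

Section LinkDeletion.
Variable T : finType.
Implicit Types (X : {set {set T}}) (s t W : {set T}) (v : T).

Definition link X v := [set W : {set T} | (v \notin W) && (v |: W \in X)].
Definition deletion X v := [set W in X | v \notin W].

Lemma void_link X v : link X v = set0 -> X = deletion X v.
Proof.
move=> lk0; apply/setP => W; rewrite inE.
case: (boolP (v \in W)) => vW; last by rewrite andbT.
rewrite andbF; apply/negbTE/negP => WX.
have : W :\ v \in link X v by rewrite inE setD11 setD1K.
by rewrite lk0 inE.
Qed.

Lemma facet_of_link X v t : is_facet (link X v) t -> is_facet X (v |: t).
Proof.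
case/andP; rewrite inE => /andP [vt tX] /forallP tmax.
rewrite /is_facet tX; apply/forallP => u; apply/implyP => uX; apply/implyP => tu.
have vu : v \in u by apply: (subsetP tu); exact: setU11.
have ulk : u :\ v \in link X v by rewrite inE setD11 setD1K.
have tu' : t \subset u :\ v.
  by rewrite subsetD1 vt andbT (subset_trans _ tu) // subsetUr.
by have := tmax (u :\ v); rewrite ulk tu' => /eqP <-; rewrite setD1K.
Qed.

Lemma facet_to_link X v t : v \in t -> is_facet X t -> is_facet (link X v) (t :\ v).
Proof.
move=> vt /andP [tX /forallP tmax].
rewrite /is_facet inE setD11 setD1K //= tX /=.
apply/forallP => u; apply/implyP; rewrite inE => /andP [vu uX]; apply/implyP => tu.
have tu' : t \subset v |: u by rewrite -(setD1K vt) setUS.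
by have := tmax (v |: u); rewrite uX tu' => /eqP <-; rewrite setU1K.
Qed.

Lemma free_face_lift X v s :
  v \notin s -> is_free_face (link X v) s -> is_free_face X (v |: s).
Proof.
move=> vs /andP [slk /cards1P [t facets_s]].
have : t \in [set u in link X v | is_facet (link X v) u && (s \subset u)].
  by rewrite facets_s set11.
rewrite inE => /andP [tlk /andP [ft st]].
rewrite /is_free_face; move: (slk); rewrite inE => /andP [_ ->] /=.
apply/cards1P; exists (v |: t); apply/setP => u; rewrite !inE.
apply/idP/idP.
- case/andP => uX /andP [fu su].
  have vu : v \in u by apply: (subsetP su); exact: setU11.
  have : u :\ v \in [set u in link X v | is_facet (link X v) u && (s \subset u)].
    rewrite inE (facet_to_link vu fu) subsetD1 vs andbT inE setD11 setD1K //=.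
    by rewrite uX (subset_trans _ su) // subsetUr.
  by rewrite facets_s inE => /eqP <-; rewrite setD1K.
- move/eqP => ->; move: (tlk); rewrite inE => /andP [_ ->].
  by rewrite facet_of_link // setUS.
Qed.

Lemma link_collapse X v s :
  v \notin s -> link (collapse_at X (v |: s)) v = collapse_at (link X v) s.
Proof.
move=> vs; apply/setP => W; rewrite !inE.
case: (boolP (v \in W)) => //= vW; congr (_ && ~~ _).
apply/idP/idP => [/subsetP sub|]; last exact: setUS.
apply/subsetP => x xs; have := sub x; rewrite !inE xs orbT => /(_ isT).
by case/orP => // /eqP xv; move: vs; rewrite -xv xs.
Qed.

Lemma deletion_collapse X v s :
  deletion (collapse_at X (v |: s)) v = deletion X v.
Proof.
apply/setP => W; rewrite !inE.
case: (boolP (v \in W)) => vW; rewrite ?andbF ?andbT //.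
case: (W \in X); rewrite ?andbT //=.
by apply/negP => /subsetP /(_ v (setU11 _ _)); rewrite (negbTE vW).
Qed.

Lemma link_deletion_collapsible d X v :
  d_collapsible d (link X v) -> d_collapsible d.+1 (deletion X v) ->
  d_collapsible d.+1 X.
Proof.
move Elk : (link X v) => L collL; elim: collL X Elk => [|L0 L1 [s fs ss] _ IH] X Elk coll_del.
  by rewrite (void_link Elk).
have vs : v \notin s by move: fs; rewrite -Elk => /andP []; rewrite inE => /andP [].
apply: (dcoll_step (Y := collapse_at X (v |: s))).
  apply: ElemCollapse; first by apply: free_face_lift; rewrite // Elk.
  by rewrite cardsU1 vs.
by apply: IH; rewrite ?link_collapse ?Elk ?deletion_collapse.
Qed.

(* A full simplex is d-collapsible for every d, via its empty free face. *)
Lemma simplex_collapsible d (U : {set T}) :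
  d_collapsible d [set W : {set T} | W \subset U].
Proof.
set X := [set W : {set T} | W \subset U].
have facetU t : is_facet X t = (t == U).
  rewrite /is_facet inE; apply/idP/eqP => [/andP [tU /forallP tmax] | ->].
    by have := tmax U; rewrite inE subxx tU eq_sym => /eqP.
  by rewrite subxx; apply/forallP => u; rewrite inE; apply/implyP => uU;
     apply/implyP => Uu; rewrite eqEsubset uU.
apply: (dcoll_step (Y := collapse_at X set0)); last first.
  have -> : collapse_at X set0 = set0 by apply/setP => t; rewrite !inE sub0set andbF.
  exact: dcoll_void.
apply: ElemCollapse; last by rewrite cards0.
rewrite /is_free_face inE sub0set; apply/cards1P; exists U.
by apply/setP => t; rewrite !inE facetU sub0set andbT andb_idl // => /eqP ->.
Qed.
End LinkDeletion.

Section LoopedNonCoverComplex.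
Variables (T : finType) (e : rel T).
Hypotheses (e_sym : symmetric e) (e_irr : irreflexive e).
Implicit Types (V A I J D W S : {set T}) (u v w : T).

Definition spans_edge A S : bool :=
  [exists u in S, (u \in A) || [exists w in S, e u w]].

(* The non-cover complex of G[V] with a loop added at every vertex of A. *)
Definition ncc V A : {set {set T}} :=
  [set W : {set T} | (W \subset V) && spans_edge A (V :\: W)].

Definition active V A : {set T} :=
  [set u in V | (u \in A) || [exists w in V, e u w]].

Definition admissible V A I : bool :=
  (I \subset V) && [forall u in I, [&& u \notin A, [exists w in V, e u w] &
     [forall w in I, ~~ e u w]]].

Definition dom_bound d V A I : Prop :=
  forall D, D \subset V -> dominates e D I -> #|active V A| <= d + #|D| + 1.

Lemma admissibleP V A I u : admissible V A I -> u \in I ->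
  [/\ u \in V, u \notin A, exists2 w, w \in V & e u w &
      forall w, w \in I -> ~~ e u w].
Proof.
case/andP => IV /forallP adm uI; have := adm u.
rewrite uI => /and3P [uA /existsP [w /andP [wV euw]] /forallP indep].
split => //; [exact: (subsetP IV) | by exists w | ].
by move=> x xI; have := indep x; rewrite xI.
Qed.

Lemma active_sub V A : active V A \subset V.
Proof. by apply/subsetP => u; rewrite inE => /andP []. Qed.

Lemma active_delete V A v : active (V :\ v) A \subset active V A :\ v.
Proof.
apply/subsetP => x; rewrite !inE => /andP [/andP [xv xV] xact]; rewrite xv xV.
case/orP: xact => [-> //|/existsP [w]]; rewrite !inE => /andP [/andP [_ wV] exw].
by apply/orP; right; apply/existsP; exists w; rewrite wV.
Qed.

Lemma link_ncc V A v : v \in V -> link (ncc V A) v = ncc (V :\ v) A.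
Proof.
move=> vV; apply/setP => W; rewrite !inE subUset sub1set vV subsetD1 /=.
case: (boolP (v \in W)) => vW; rewrite ?andbF ?andbT //=.
congr (_ && spans_edge A _); apply/setP => x; rewrite !inE.
by case: (x == v); case: (x \in W).
Qed.

Lemma deletion_ncc_looped V A v : v \in V -> v \in A ->
  deletion (ncc V A) v = [set W : {set T} | W \subset V :\ v].
Proof.
move=> vV vA; apply/setP => W; rewrite !inE subsetD1.
case: (boolP (v \in W)) => vW; rewrite ?andbF ?andbT //=.
case: (W \subset V) => //=.
by apply/existsP; exists v; rewrite !inE vW vV vA.
Qed.

Lemma deletion_ncc V A v : v \in V -> v \notin A ->
  deletion (ncc V A) v = ncc (V :\ v) (A :|: [set w | e v w]).
Proof.
move=> vV vA; apply/setP => W; rewrite !inE subsetD1.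
case: (boolP (v \in W)) => vW; rewrite ?andbF ?andbT //=.
case: (W \subset V) => //=.
apply/idP/idP.
- case/existsP => u; rewrite !inE => /andP [/andP [uW uV] /orP [uA|/existsP [w]]].
    have uv : u != v by apply: contraNneq vA => <-.
    by apply/existsP; exists u; rewrite !inE uW uV uA uv.
  rewrite !inE => /andP [/andP [wW wV] euw].
  have [uv|uv] := eqVneq u v.
    move: euw; rewrite uv => evw.
    have wv : w != v by apply: contraTneq evw => ->; rewrite e_irr.
    by apply/existsP; exists w; rewrite !inE wW wV evw wv orbT.
  apply/existsP; exists u; rewrite !inE uW uV uv /=.
  have [wv|wv] := eqVneq w v; first by rewrite -wv e_sym euw orbT.
  by apply/orP; right; apply/existsP; exists w; rewrite !inE wv wW wV euw.
- case/existsP => u; rewrite !inE => /andP [/and3P [uW uv uV] uact].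
  case/orP: uact => [/orP [uA|evu]|/existsP [w]].
  + by apply/existsP; exists u; rewrite !inE uW uV uA.
  + apply/existsP; exists v; rewrite !inE vW vV /=; apply/orP; right.
    by apply/existsP; exists u; rewrite !inE uW uV evu.
  + rewrite !inE => /andP [/and3P [wW wv wV] euw].
    apply/existsP; exists u; rewrite !inE uW uV /=; apply/orP; right.
    by apply/existsP; exists w; rewrite !inE wW wV euw.
Qed.

Lemma admissible_active V A I : admissible V A I -> I \subset active V A.
Proof.
move=> adm; apply/subsetP => u uI; have [uV _ [w wV euw] _] := admissibleP adm uI.
by rewrite inE uV; apply/orP; right; apply/existsP; exists w; rewrite wV.
Qed.

Lemma dominatesS D I J : I \subset J -> dominates e D J -> dominates e D I.
Proof.
move=> IJ /forallP dom; apply/forallP => x; apply/implyP => xI.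
by have := dom x; rewrite (subsetP IJ x xI).
Qed.

Lemma dominates_add D I J v : dominates e D J ->
  (forall x, x \in I -> x \notin J -> e x v) -> dominates e (v |: D) I.
Proof.
move=> /forallP dom nbv; apply/forallP => x; apply/implyP => xI.
case: (boolP (x \in J)) => xJ; last first.
  by apply/existsP; exists v; rewrite setU11 nbv.
have /existsP [y /andP [yD exy]] := implyP (dom x) xJ.
by apply/existsP; exists y; rewrite inE yD orbT.
Qed.

(* A face of ncc V A leaves some active vertex uncovered, so I is dominated
   by fewer than |active V A| vertices of V. *)
Lemma face_small_domination V A I W : W \in ncc V A -> admissible V A I ->
  exists2 D : {set T}, (D \subset V) && dominates e D I & #|D| < #|active V A|.
Proof.
rewrite inE => /andP [_ /existsP [u /andP [uVW uedge]]] adm.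
move: uVW; rewrite inE => /andP [_ uV].
have [I0|[x xI]] := set_0Vmem I.
  exists set0; first by rewrite sub0set I0; apply/forallP => y; rewrite inE.
  rewrite cards0; apply/card_gt0P; exists u; rewrite inE uV.
  case/orP: uedge => [-> //|/existsP [w /andP [wVW euw]]].
  by apply/orP; right; apply/existsP; exists w; move: wVW; rewrite inE => /andP [_ ->].
exists (active V A :\: I).
  rewrite (subset_trans (subsetDl _ _) (active_sub V A)) /=.
  apply/forallP => y; apply/implyP => yI.
  have [yV _ [w wV eyw] indep] := admissibleP adm yI.
  apply/existsP; exists w; rewrite !inE wV eyw andbT (contraTN (indep w)) //=.
  by apply/orP; right; apply/existsP; exists y; rewrite yV e_sym.
apply: proper_card; apply/properP; split; first exact: subsetDl.
by exists x; [exact: (subsetP (admissible_active adm)) | rewrite inE xI].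
Qed.

(* Passing to the link of an active vertex v outside I: the vertices of I
   whose only neighbour in V is v drop out of I, and each of them is lost
   from the active set together with v. *)
Lemma link_invariant V A I d v : v \in active V A -> v \notin I ->
  admissible V A I -> dom_bound d V A I ->
  let I' := [set u in I | [exists w in V :\ v, e u w]] in
  admissible (V :\ v) A I' /\
  (forall D, D \subset V :\ v -> dominates e D I' -> #|active (V :\ v) A| <= d + #|D|).
Proof.
move=> vact vI adm bound I'.
have vV : v \in V := subsetP (active_sub V A) v vact.
split.
  apply/andP; split.
    apply/subsetP => u; rewrite inE => /andP [uI _].
    have [uV _ _ _] := admissibleP adm uI.
    by rewrite !inE uV andbT; apply: contraNneq vI => <-.
  apply/forallP => u; apply/implyP; rewrite inE => /andP [uI ->].
  have [_ -> _ indep] := admissibleP adm uI.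
  by apply/forallP => w; apply/implyP; rewrite inE => /andP [wI _]; exact: indep.
move=> D DVv dom.
have DV : D \subset V := subset_trans DVv (subD1set V v).
have vD : v \notin D by apply: contraNN vI => /(subsetP DVv); rewrite setD11.
have card_v := cardsD1 v (active V A); rewrite vact in card_v.
have [I'I|[u]] := set_0Vmem (I :\: I').
  have II' : I \subset I' by rewrite -setD_eq0 I'I.
  have := subset_leq_card (active_delete V A v).
  have := bound D DV (dominatesS II' dom).
  move: card_v; clear; lia.
move=> /setDP [uI uI'].
have [uV uA [w wV euw] _] := admissibleP adm uI.
have lone x : x \in I -> x \notin I' -> e x v.
  move=> xI; rewrite inE xI /= => /existsPn nbx.
  have [_ _ [y yV exy] _] := admissibleP adm xI.
  by have := nbx y; rewrite !inE yV exy !andbT negbK => /eqP <-.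
have uv : u != v by apply: contraNneq vI => <-.
have uact : u \in active V A :\ v.
  by rewrite !inE uv uV; apply/orP; right; apply/existsP; exists w; rewrite wV.
have card_u := cardsD1 u (active V A :\ v); rewrite uact in card_u.
have sub : active (V :\ v) A \subset (active V A :\ v) :\ u.
  apply/subsetP => x xact; rewrite in_setD1 (subsetP (active_delete V A v)) // andbT.
  apply: contraTneq xact => ->; rewrite inE (negbTE uA) /= andbC.
  by move: uI'; rewrite inE uI /= => /negbTE ->.
have := subset_leq_card sub.
have := bound (v |: D); rewrite subUset sub1set vV DV cardsU1 vD.
move=> /(_ isT (dominates_add dom lone)).
move: card_v card_u; clear; lia.
Qed.

Lemma active_deletion V A v : v \in V ->
  active (V :\ v) (A :|: [set w | e v w]) \subset active V A :\ v.
Proof.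
move=> vV; apply/subsetP => x; rewrite !inE => /andP [/andP [xv xV] xact].
rewrite xv xV /=; case/orP: xact => [/orP [-> //|evx]|/existsP [w]].
  by apply/orP; right; apply/existsP; exists v; rewrite vV e_sym.
rewrite !inE => /andP [/andP [_ wV] exw].
by apply/orP; right; apply/existsP; exists w; rewrite wV.
Qed.

(* Passing to the deletion of an unlooped active vertex v outside I: the
   neighbours of v get loops and leave I, and v itself is lost. *)
Lemma deletion_invariant V A I d v : v \in active V A -> v \notin I -> v \notin A ->
  admissible V A I -> dom_bound d V A I ->
  let I' := [set u in I | ~~ e v u] in
  admissible (V :\ v) (A :|: [set w | e v w]) I' /\
  dom_bound d (V :\ v) (A :|: [set w | e v w]) I'.
Proof.
move=> vact vI vA adm bound I'.
have vV : v \in V := subsetP (active_sub V A) v vact.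
split.
  apply/andP; split.
    apply/subsetP => u; rewrite inE => /andP [uI _].
    have [uV _ _ _] := admissibleP adm uI.
    by rewrite !inE uV andbT; apply: contraNneq vI => <-.
  apply/forallP => u; apply/implyP; rewrite inE => /andP [uI evu].
  have [_ uA [w wV euw] indep] := admissibleP adm uI.
  rewrite !inE (negbTE uA) (negbTE evu) /=; apply/andP; split.
    have wv : w != v by apply: contraNneq evu => <-; rewrite e_sym.
    by apply/existsP; exists w; rewrite !inE wV euw wv.
  by apply/forallP => x; apply/implyP; rewrite inE => /andP [xI _]; exact: indep.
move=> D DVv dom.
have DV : D \subset V := subset_trans DVv (subD1set V v).
have vD : v \notin D by apply: contraNN vI => /(subsetP DVv); rewrite setD11.
have nbv x : x \in I -> x \notin I' -> e x v.
  by move=> xI; rewrite inE xI negbK e_sym.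
have card_v := cardsD1 v (active V A); rewrite vact in card_v.
have := subset_leq_card (active_deletion A vV).
have := bound (v |: D); rewrite subUset sub1set vV DV cardsU1 vD.
move=> /(_ isT (dominates_add dom nbv)).
move: card_v; clear; lia.
Qed.

(* When every active vertex lies in the independent set I, every vertex
   set misses all loops and edges, so the complex is void. *)
Lemma ncc_void V A I : admissible V A I -> active V A \subset I -> ncc V A = set0.
Proof.
move=> adm actI; apply/setP => W; rewrite !inE.
apply/negbTE/negP => /andP [_ /existsP [u /andP [uVW uedge]]].
move: uVW; rewrite inE => /andP [_ uV].
case/orP: uedge => [uA|/existsP [w /andP [wVW euw]]].
  have uI : u \in I by apply: (subsetP actI); rewrite inE uV uA.
  by have [_ /negP] := admissibleP adm uI.
move: wVW; rewrite inE => /andP [_ wV].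
have act x y : x \in V -> y \in V -> e x y -> x \in I.
  move=> xV yV exy; apply: (subsetP actI); rewrite inE xV.
  by apply/orP; right; apply/existsP; exists y; rewrite yV.
have ewu : e w u by rewrite e_sym.
have [_ _ _ indep] := admissibleP adm (act u w uV wV euw).
by have := indep w (act w u wV uV ewu); rewrite euw.
Qed.

(* The
   deletion is handled by induction (or is a simplex); the link is void or,
   by face_small_domination, forces d > 0 and is handled by induction. *)
Lemma ncc_collapsible_step V A I d v :
  (forall A' I' d', admissible (V :\ v) A' I' -> dom_bound d' (V :\ v) A' I' ->
     d_collapsible d' (ncc (V :\ v) A')) ->
  v \in active V A -> v \notin I -> admissible V A I -> dom_bound d V A I ->
  d_collapsible d (ncc V A).
Proof.
move=> IH vact vI adm bound.
have vV : v \in V := subsetP (active_sub V A) v vact.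
have [adm_lk bound_lk] := link_invariant vact vI adm bound.
have coll_del : d_collapsible d (deletion (ncc V A) v).
  have [vA|vA] := boolP (v \in A).
    by rewrite deletion_ncc_looped //; exact: simplex_collapsible.
  have [adm_del bound_del] := deletion_invariant vact vI vA adm bound.
  by rewrite deletion_ncc //; exact: IH adm_del bound_del.
have [lk0|[W Wlk]] := set_0Vmem (ncc (V :\ v) A).
  by rewrite (@void_link _ (ncc V A) v) // link_ncc.
have [D /andP [DV dom] Dlt] := face_small_domination Wlk adm_lk.
case: d {bound} bound_lk coll_del => [|d] bound_lk coll_del.
  by have := bound_lk D DV dom; move: Dlt; clear; lia.
apply: link_deletion_collapsible coll_del.
rewrite link_ncc //; apply: IH adm_lk _ => D' D'V dom'.
by have := bound_lk D' D'V dom'; clear; lia.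
Qed.

Lemma ncc_collapsible V A I d :
  admissible V A I -> dom_bound d V A I -> d_collapsible d (ncc V A).
Proof.
have [n ltVn] := ubnP #|V|.
elim: n V ltVn A I d => // n IH V ltVn A I d adm bound.
have [actI|[v /setDP [vact vI]]] := set_0Vmem (active V A :\: I).
  by rewrite (ncc_void adm) -?setD_eq0 ?actI //; exact: dcoll_void.
apply: (ncc_collapsible_step _ vact vI adm bound) => A' I' d'; apply: IH.
by rewrite (cardsD1 v) (subsetP (active_sub V A) v vact) add1n ltnS in ltVn.
Qed.
End LoopedNonCoverComplex.

Section WholeGraph.
Variables (T : finType) (e : rel T).
Implicit Types (I D W : {set T}).

Lemma non_cover_complexE : non_cover_complex e = ncc e setT set0.
Proof.
apply/setP => W; rewrite !inE subsetT /is_cover; apply/forallPn/existsP.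
- case=> u /forallPn [v]; rewrite negb_imply negb_or => /and3P [euv uW vW].
  by exists u; rewrite !inE uW; apply/existsP; exists v; rewrite !inE vW euv.
- case=> u; rewrite !inE andbT => /andP [uW /existsP [v]].
  rewrite !inE andbT => /andP [vW euv].
  by exists u; apply/forallPn; exists v; rewrite euv (negbTE uW) (negbTE vW).
Qed.

Lemma active_full : no_isolated e -> active e setT set0 = setT.
Proof.
move=> no_iso; apply/setP => u; rewrite !inE; have [w euw] := no_iso u.
by apply/existsP; exists w; rewrite inE.
Qed.

Lemma independent_admissible I :
  no_isolated e -> independent e I -> admissible e setT set0 I.
Proof.
move=> no_iso /forallP indep; rewrite /admissible subsetT.
apply/forallP => u; apply/implyP => uI; rewrite inE.
have [w euw] := no_iso u; rewrite (_ : [exists w in setT, e u w]) /=.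
  by have := indep u; rewrite uI.
by apply/existsP; exists w; rewrite inE.
Qed.

Lemma gammaA_le D A : dominates e D A -> gammaA e A <= #|D|.
Proof.
move=> domD; rewrite /gammaA -big_filter.
have : D \in filter (dominates e ^~ A) (index_enum _).
  by rewrite mem_filter domD mem_index_enum.
elim: (filter _ _) => [//|D' s IHs]; rewrite inE big_cons => /orP [/eqP <-|/IHs].
  exact: geq_minl.
exact: leq_trans (geq_minr _ _).
Qed.

Lemma indep_dom_attained :
  exists2 I, independent e I & indep_dom e = gammaA e I.
Proof.
have indep0 : independent e set0 by apply/forallP => x; rewrite inE.
have [I indepI maxI] := @eq_bigmax_cond _ (independent e) (gammaA e)
  (ltac:(by apply/card_gt0P; exists set0)).
by exists I.
Qed.
End WholeGraph.

Unset Implicit Arguments.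
Theorem theorem1p2 (T : finType) (e : rel T) :
  simple_graph e -> no_isolated e ->
  d_collapsible (#|T| - indep_dom e - 1) (non_cover_complex e).
Proof.
move=> [e_sym e_irr] no_iso.
have [I indepI ->] := indep_dom_attained e.
rewrite non_cover_complexE.
apply: (ncc_collapsible e_sym e_irr (independent_admissible no_iso indepI)).
move=> D _ domD; rewrite active_full // cardsT.
by have := gammaA_le domD; lia.
Qed.
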